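(* Let $H_1,H_2$ be separable Hilbert spaces, $K\in B(H_1)$, $L\in B(H_2)$, and let $\{x_n\oplus y_n\}_{n\geqslant1}$ be a $K\oplus L$-frame for $H_1\oplus H_2$. If $\{a_n\oplus b_n\}_{n\geqslant1}$ is a $K\oplus L$-dual frame to $\{x_n\oplus y_n\}_{n\geqslant1}$, then $\{a_n\}_{n\geqslant1}$ is a $K$-dual frame to $\{x_n\}_{n\geqslant1}$ and $\{b_n\}_{n\geqslant1}$ is an $L$-dual frame to $\{y_n\}_{n\geqslant1}$.
   Context: $H_1\oplus H_2$ is the Hilbert space of pairs $x\oplus y$ with inner product $\langle x\oplus y,a\oplus b\rangle=\langle x,a\rangle+\langle y,b\rangle$; $(K\oplus L)(x\oplus y)=K(x)\oplus L(y)$. For a Hilbert space $H$ and $K\in B(H)$, $\{z_n\}_{n\geqslant1}$ is a $K$-frame if there are $A,B>0$ with $A\|K^*z\|^2\leq\sum_n|\langle z,z_n\rangle|^2\leq B\|z\|^2$ for all $z\in H$. A $K$-dual frame to a $K$-frame $\{z_n\}$ is a Bessel sequence $\{f_n\}_{n\geqslant1}$ in $H$ such that $Kz=\sum_{n=1}^\infty\langle z,f_n\rangle z_n$ for all $z\in H$. *)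

From HB Require Import structures.
From mathcomp Require Import all_boot all_order all_algebra.
From mathcomp Require Import complex.
From mathcomp Require Import all_classical all_reals all_analysis.
Set Implicit Arguments.
Unset Strict Implicit.
Unset Printing Implicit Defensive.
Import Order.TTheory GRing.Theory Num.Theory.
Import numFieldNormedType.Exports.
Local Open Scope classical_set_scope.
Local Open Scope ring_scope.

Definition inner_product (R : realType) (V : lmodType R[i])
  (ip : V -> V -> R[i]) : Prop :=
  [/\ (forall (a : R[i]) (x y z : V), ip (a *: x + y) z = a * ip x z + ip y z),
      (forall x y : V, ip x y = Num.conj (ip y x)),
      (forall x : V, 0 <= ip x x) &
      (forall x : V, ip x x = 0 -> x = 0)].

Definition hnorm (R : realType) (V : lmodType R[i]) (ip : V -> V -> R[i])
  (x : V) : R := Num.sqrt (complex.Re (ip x x)).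

Definition hilbert (R : realType) (V : lmodType R[i]) (ip : V -> V -> R[i])
  : Prop :=
  inner_product ip /\
  forall u : nat -> V,
    (forall e : R, 0 < e -> exists N : nat, forall m n : nat,
        (N <= m)%N -> (N <= n)%N -> hnorm ip (u m - u n) < e) ->
    exists l : V, (fun n => hnorm ip (u n - l)) @ \oo --> (0 : R).

Definition separable (R : realType) (V : lmodType R[i]) (ip : V -> V -> R[i])
  : Prop :=
  exists d : nat -> V, forall (x : V) (e : R), 0 < e ->
    exists n : nat, hnorm ip (x - d n) < e.

Definition bounded_op (R : realType) (V : lmodType R[i]) (ip : V -> V -> R[i])
  (K : V -> V) : Prop :=
  (forall (a : R[i]) (u v : V), K (a *: u + v) = a *: K u + K v) /\
  exists M : R, forall x : V, hnorm ip (K x) <= M * hnorm ip x.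

Definition is_adjoint (R : realType) (V : lmodType R[i]) (ip : V -> V -> R[i])
  (K Ks : V -> V) : Prop :=
  forall x y : V, ip (K x) y = ip x (Ks y).

Definition coef_sum (R : realType) (V : lmodType R[i]) (ip : V -> V -> R[i])
  (z : V) (zs : nat -> V) : \bar R :=
  (\sum_(1 <= n <oo) ((Normc.normc (ip z (zs n)) ^+ 2)%:E))%E.

Definition Kframe (R : realType) (V : lmodType R[i]) (ip : V -> V -> R[i])
  (K : V -> V) (zs : nat -> V) : Prop :=
  exists Ks : V -> V, is_adjoint ip K Ks /\
  exists A B : R, 0 < A /\ 0 < B /\
    forall z : V,
      ((A * hnorm ip (Ks z) ^+ 2)%:E <= coef_sum ip z zs)%E /\
      (coef_sum ip z zs <= (B * hnorm ip z ^+ 2)%:E)%E.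

Definition bessel (R : realType) (V : lmodType R[i]) (ip : V -> V -> R[i])
  (fs : nat -> V) : Prop :=
  exists B : R, 0 < B /\
    forall z : V, (coef_sum ip z fs <= (B * hnorm ip z ^+ 2)%:E)%E.

Definition Kdual (R : realType) (V : lmodType R[i]) (ip : V -> V -> R[i])
  (K : V -> V) (zs fs : nat -> V) : Prop :=
  bessel ip fs /\
  forall z : V,
    (fun N : nat => hnorm ip (K z - \sum_(1 <= n < N) ip z (fs n) *: zs n))
      @ \oo --> (0 : R).

Definition dsum_ip (R : realType) (V1 V2 : lmodType R[i])
  (ip1 : V1 -> V1 -> R[i]) (ip2 : V2 -> V2 -> R[i]) (p q : V1 * V2) : R[i] :=
  ip1 p.1 q.1 + ip2 p.2 q.2.

Definition dsum_op (V1 V2 : Type) (K : V1 -> V1) (L : V2 -> V2)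
  (p : V1 * V2) : V1 * V2 := (K p.1, L p.2).

(** Compressing to a summand: with [j] the inclusion [H1 -> H1 (+) H2] and
    [p] the projection back onto [H1], [p] is the adjoint of [j], [j] is an
    isometry, [p] is a contraction and [p (K (+) L) j = K].  Hence
    [<j z, w> = <z, p w>] turns the frame and Bessel sums of [j z] for the
    big sequences into those of [z] for the projected ones, and applying [p]
    to the reconstruction formula for [j z] yields the one for [z]. *)

From Pilot Require Import Defs.
From HB Require Import structures.
From mathcomp Require Import all_boot all_order all_algebra.
From mathcomp Require Import complex.
From mathcomp Require Import all_classical all_reals all_analysis.
Local Open Scope ring_scope.
Import Order.TTheory GRing.Theory Num.Theory.
Import numFieldNormedType.Exports.

Set Implicit Arguments.
Unset Strict Implicit.
Unset Printing Implicit Defensive.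

Lemma hnorm_ge0 (R : realType) (V : lmodType R[i]) (ip : V -> V -> R[i])
  (x : V) : 0 <= hnorm ip x.
Proof. exact: sqrtr_ge0. Qed.

Section InnerProduct.
Variables (R : realType) (V : lmodType R[i]) (ip : V -> V -> R[i]).
Hypothesis ip_inner : inner_product ip.

Lemma inner_product0l (w : V) : ip 0 w = 0.
Proof.
have [ipD _ _ _] := ip_inner.
by have := ipD (-1) 0 0 w; rewrite scaleN1r oppr0 addr0 mulN1r addNr.
Qed.

Lemma inner_product0r (w : V) : ip w 0 = 0.
Proof. by have [_ ipC _ _] := ip_inner; rewrite ipC inner_product0l conjC0. Qed.

Lemma Re_inner_product_ge0 (w : V) : 0 <= complex.Re (ip w w).
Proof.
by have [_ _ ip_ge0 _] := ip_inner; have := ip_ge0 w; rewrite lecE => /andP[].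
Qed.

End InnerProduct.

Section Compression.
Variables (R : realType) (H V : lmodType R[i]).
Variables (ipH : H -> H -> R[i]) (ipV : V -> V -> R[i]).
Variables (K : H -> H) (T : V -> V) (j : H -> V) (p : {linear V -> H}).
Hypothesis ipV_j_l : forall u w, ipV (j u) w = ipH u (p w).
Hypothesis ipV_j_r : forall v z, ipV v (j z) = ipH (p v) z.
Hypothesis compress_T : forall u, p (T (j u)) = K u.
Hypothesis hnorm_p_le : forall w, hnorm ipH (p w) <= hnorm ipV w.
Hypothesis hnorm_j : forall z, hnorm ipV (j z) = hnorm ipH z.

Lemma coef_sum_j (z : H) (zs : nat -> V) :
  Defs.coef_sum ipV (j z) zs = Defs.coef_sum ipH z (p \o zs).
Proof. by rewrite /coef_sum; apply: eq_eseriesr => n _; rewrite ipV_j_l. Qed.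

Lemma Kframe_compress (zs : nat -> V) :
  Kframe ipV T zs -> Kframe ipH K (p \o zs).
Proof.
move=> [Ts [T_adj [A [B [A_gt0 [B_gt0 frame_zs]]]]]].
exists (fun z => p (Ts (j z))); split.
  by move=> u z; rewrite -ipV_j_l -T_adj ipV_j_r compress_T.
exists A, B; do 2 split => //.
move=> z; have [lower upper] := frame_zs (j z); rewrite -coef_sum_j; split.
- apply: le_trans lower.
  by rewrite lee_fin ler_pM2l // lerXn2r ?nnegrE ?hnorm_ge0.
- by rewrite -hnorm_j.
Qed.

Lemma bessel_compress (fs : nat -> V) : bessel ipV fs -> bessel ipH (p \o fs).
Proof.
move=> [B [B_gt0 bessel_fs]]; exists B; split => // z.
by rewrite -coef_sum_j -hnorm_j.
Qed.

Lemma Kdual_compress (zs fs : nat -> V) :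
  Kdual ipV T zs fs -> Kdual ipH K (p \o zs) (p \o fs).
Proof.
move=> [bessel_fs recon]; split; first exact: bessel_compress.
move=> z; apply: (squeeze_cvgr _ (cvg_cst 0) (recon (j z))).
near=> N; rewrite hnorm_ge0 /=.
have -> : K z - \sum_(1 <= n < N) ipH z (p (fs n)) *: p (zs n) =
          p (T (j z) - \sum_(1 <= n < N) ipV (j z) (fs n) *: zs n).
  rewrite linearB /= compress_T (linear_sum p).
  by congr (_ - _); apply: eq_bigr => n _; rewrite linearZ ipV_j_l.
exact: hnorm_p_le.
Unshelve. all: by end_near.
Qed.

End Compression.

Section DirectSum.
Variables (R : realType) (H1 H2 : lmodType R[i]).
Variables (ip1 : H1 -> H1 -> R[i]) (ip2 : H2 -> H2 -> R[i]).
Hypotheses (ip1_inner : inner_product ip1) (ip2_inner : inner_product ip2).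
Local Notation ip := (dsum_ip ip1 ip2).

Lemma dsum_ip_inl (u : H1) (w : H1 * H2) : ip (u, 0) w = ip1 u w.1.
Proof. by rewrite /dsum_ip inner_product0l // addr0. Qed.

Lemma dsum_ip_inr (u : H2) (w : H1 * H2) : ip (0, u) w = ip2 u w.2.
Proof. by rewrite /dsum_ip inner_product0l // add0r. Qed.

Lemma dsum_ip_inl_r (v : H1 * H2) (z : H1) : ip v (z, 0) = ip1 v.1 z.
Proof. by rewrite /dsum_ip inner_product0r // addr0. Qed.

Lemma dsum_ip_inr_r (v : H1 * H2) (z : H2) : ip v (0, z) = ip2 v.2 z.
Proof. by rewrite /dsum_ip inner_product0r // add0r. Qed.

Lemma hnorm_dsum_inl (z : H1) : hnorm ip (z, 0) = hnorm ip1 z.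
Proof. by rewrite /hnorm dsum_ip_inl. Qed.

Lemma hnorm_dsum_inr (z : H2) : hnorm ip (0, z) = hnorm ip2 z.
Proof. by rewrite /hnorm dsum_ip_inr. Qed.

Lemma hnorm_fst_le (w : H1 * H2) : hnorm ip1 w.1 <= hnorm ip w.
Proof.
by rewrite /hnorm /dsum_ip ler_wsqrtr // raddfD lerDl Re_inner_product_ge0.
Qed.

Lemma hnorm_snd_le (w : H1 * H2) : hnorm ip2 w.2 <= hnorm ip w.
Proof.
by rewrite /hnorm /dsum_ip ler_wsqrtr // raddfD lerDr Re_inner_product_ge0.
Qed.

Variables (K : H1 -> H1) (L : H2 -> H2) (xs fs : nat -> H1) (ys gs : nat -> H2).

Lemma Kframe_dsum_fst :
  Kframe ip (dsum_op K L) (fun n => (xs n, ys n)) -> Kframe ip1 K xs.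
Proof.
by move/(Kframe_compress (p := fst : {linear _ -> H1}) dsum_ip_inl
  dsum_ip_inl_r (fun _ => erefl) hnorm_fst_le hnorm_dsum_inl).
Qed.

Lemma Kframe_dsum_snd :
  Kframe ip (dsum_op K L) (fun n => (xs n, ys n)) -> Kframe ip2 L ys.
Proof.
by move/(Kframe_compress (p := snd : {linear _ -> H2}) dsum_ip_inr
  dsum_ip_inr_r (fun _ => erefl) hnorm_snd_le hnorm_dsum_inr).
Qed.

Lemma Kdual_dsum_fst :
  Kdual ip (dsum_op K L) (fun n => (xs n, ys n)) (fun n => (fs n, gs n)) ->
  Kdual ip1 K xs fs.
Proof.
by move/(Kdual_compress (p := fst : {linear _ -> H1}) dsum_ip_inl
  (fun _ => erefl) hnorm_fst_le hnorm_dsum_inl).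
Qed.

Lemma Kdual_dsum_snd :
  Kdual ip (dsum_op K L) (fun n => (xs n, ys n)) (fun n => (fs n, gs n)) ->
  Kdual ip2 L ys gs.
Proof.
by move/(Kdual_compress (p := snd : {linear _ -> H2}) dsum_ip_inr
  (fun _ => erefl) hnorm_snd_le hnorm_dsum_inr).
Qed.

End DirectSum.

Theorem proposition2p16 (R : realType) (H1 H2 : lmodType R[i])
  (ip1 : H1 -> H1 -> R[i]) (ip2 : H2 -> H2 -> R[i])
  (hH1 : hilbert ip1) (sH1 : separable ip1)
  (hH2 : hilbert ip2) (sH2 : separable ip2)
  (K : H1 -> H1) (L : H2 -> H2)
  (hK : bounded_op ip1 K) (hL : bounded_op ip2 L)
  (x a : nat -> H1) (y b : nat -> H2) :
  Kframe (dsum_ip ip1 ip2) (dsum_op K L) (fun n => (x n, y n)) ->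
  Kdual (dsum_ip ip1 ip2) (dsum_op K L) (fun n => (x n, y n))
        (fun n => (a n, b n)) ->
  (Kframe ip1 K x /\ Kdual ip1 K x a) /\ (Kframe ip2 L y /\ Kdual ip2 L y b).
Proof.
move=> frame dual.
have [[ip1_inner _] [ip2_inner _]] := (hH1, hH2).
split; split.
- exact (Kframe_dsum_fst ip2_inner frame).
- exact (Kdual_dsum_fst ip2_inner dual).
- exact (Kframe_dsum_snd ip1_inner frame).
- exact (Kdual_dsum_snd ip1_inner dual).
Qed.
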